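(* Let $K_n$ be the complete graph on nodes $v_1,\dots,v_n$ with threshold function $t$ satisfying $1\le t(v)\le n-1$, let $1\le m\le n$, let $K_m$ be the subgraph induced by $V_m=\{v_1,\dots,v_m\}$, and suppose $t(v_1)\le t(v_2)\le\cdots\le t(v_m)$. Let $\lambda\ge1$ and $1\le \ell\le\lambda$. If there exists an $\ell$-optimal incentive function for $K_m$ under which the set of nodes influenced by the end of round $\ell-1$ has exactly $k<m$ elements, then there exists an $\ell$-optimal incentive function for $K_m$ under which $\{v_1,\dots,v_k\}$ are influenced by the end of round $\ell-1$.
   Context: Influence model on a graph $G=(V,E)$ with thresholds $t:V\to\{1,2,\dots\}$: an incentive function is $p:V\to\{0,1,2,\dots\}$ with $0\le p(v)\le t(v)$, of cost $\sum_v p(v)$. The influence process in $G$: $\mathsf{Influenced}[p,0]=\{v: p(v)=t(v)\}$ and, for $r>0$, $\mathsf{Influenced}[p,r]=\mathsf{Influenced}[p,r-1]\cup\{v: |N(v)\cap \mathsf{Influenced}[p,r-1]|\ge t(v)-p(v)\}$, where $N(v)$ is the neighbourhood of $v$ in $G$. A node is influenced by the end of round $r$ if it lies in $\mathsf{Influenced}[p,r]$. An incentive function $p:V_m\to\{0,1,2,\dots\}$ is $\ell$-optimal for $K_m$ if it has minimum cost among all incentive functions on $V_m$ for which the influence process in $K_m$ (with thresholds $t$ restricted to $V_m$) satisfies $\mathsf{Influenced}[p,\ell]=V_m$. *)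

From mathcomp Require Import all_boot.
Unset Printing Implicit Defensive.

Fixpoint influenced (T : finType) (adj : rel T) (t p : T -> nat) (r : nat)
  : {set T} :=
  match r with
  | 0 => [set v | p v == t v]
  | r'.+1 =>
      let S := @influenced T adj t p r' in
      S :|: [set v | t v - p v <= #|[set u in S | adj v u]| ]
  end.

Definition incentive (T : finType) (t p : T -> nat) : Prop :=
  forall v, p v <= t v.

Definition cost (T : finType) (p : T -> nat) : nat := \sum_(v : T) p v.

(* The complete graph K_m on V_m = {v_1,...,v_m}, represented as 'I_m
   (vertex v_{i+1} is the ordinal i), with thresholds t restricted to V_m;
   here t : nat -> nat gives t(v_{i+1}) = t i. *)
Definition Km_adj (m : nat) : rel 'I_m := fun u v => u != v.
Definition Km_t (m : nat) (t : nat -> nat) : 'I_m -> nat := fun i => t i.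

Definition influencedKm (m : nat) (t : nat -> nat) (p : 'I_m -> nat) (r : nat)
  : {set 'I_m} := @influenced _ (@Km_adj m) (Km_t m t) p r.

Definition l_optimal_Km (m : nat) (t : nat -> nat) (l : nat) (p : 'I_m -> nat)
  : Prop :=
  [/\ @incentive _ (Km_t m t) p,
      influencedKm m t p l = [set: 'I_m] &
      forall q : 'I_m -> nat, @incentive _ (Km_t m t) q ->
        influencedKm m t q l = [set: 'I_m] -> @cost _ p <= @cost _ q].

From mathcomp Require Import all_boot.
From mathcomp Require Import fingroup perm.

#[local] Arguments incentive {T}.
#[local] Arguments cost {T}.
#[local] Arguments influenced {T}.

(* The influence process only sees the residual thresholds [t v - p v], and on
   a complete graph every vertex influenced by round r has a strictly smaller
   residual than every vertex that is not.  Since K_m is invariant under all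
   vertex permutations, permuting residuals among the vertices (where the
   thresholds allow it) yields an incentive of the same cost whose influenced
   sets are permuted accordingly.  If [v_i] with [i < k] is not influenced by
   round l-1 while some [v_j] with [j >= k] is, then [t v_i <= t v_j] lets us
   exchange their residuals; repeating this exchange moves the k influenced
   vertices onto [v_1, ..., v_k]. *)

Section InfluencePermutation.
Context {T : finType} {adj : rel T} {t : T -> nat}.

Lemma incentive_eq_residual0 (p : T -> nat) v :
  p v <= t v -> (p v == t v) = (t v - p v == 0).
Proof. by move=> pt; rewrite subn_eq0 eqn_leq pt. Qed.

Lemma influenced_perm {tau : {perm T}} {p q : T -> nat} :
  (forall u v, adj (tau u) (tau v) = adj u v) ->
  incentive t p -> incentive t q ->
  (forall v, t v - q v = t (tau v) - p (tau v)) ->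
  forall r, influenced adj t q r = tau @^-1: influenced adj t p r.
Proof.
move=> adj_tau Ip Iq res_q; elim=> [|r IH]; apply/setP=> v.
  by rewrite !inE !incentive_eq_residual0 ?res_q.
rewrite /= IH !inE res_q.
have -> : [set u in tau @^-1: influenced adj t p r | adj v u] =
          tau @^-1: [set u in influenced adj t p r | adj (tau v) u].
  by apply/setP=> u; rewrite !inE adj_tau.
by rewrite card_preimset //; apply: perm_inj.
Qed.

Lemma cost_add_residual (p : T -> nat) :
  incentive t p -> cost p + \sum_v (t v - p v) = \sum_v t v.
Proof.
by move=> Ip; rewrite /cost -big_split; apply: eq_bigr => v _; exact: subnKC.
Qed.

Lemma cost_perm_residual {tau : {perm T}} {p q : T -> nat} :
  incentive t p -> incentive t q ->
  (forall v, t v - q v = t (tau v) - p (tau v)) -> cost q = cost p.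
Proof.
move=> Ip Iq res_q; apply/eqP; rewrite -(eqn_add2r (\sum_v (t v - p v))).
rewrite cost_add_residual // (reindex_inj (@perm_inj _ tau)) /=.
by rewrite -(eq_bigr _ (fun v _ => res_q v)) cost_add_residual.
Qed.

Hypothesis adj_complete : forall u v, u != v -> adj u v.

Lemma influenced_residual_lt {p : T -> nat} {r v w} :
  incentive t p ->
  v \in influenced adj t p r -> w \notin influenced adj t p r ->
  t v - p v < t w - p w.
Proof.
move=> Ip; elim: r v w => [|r IH] v w /=.
  rewrite !inE !incentive_eq_residual0 // => /eqP-> /negbTE.
  by rewrite lt0n => ->.
set S := influenced adj t p r; rewrite !inE negb_or -ltnNge.
move=> Sv /andP[wS]; have -> : [set u in S | adj w u] = S.
  apply/setP=> u; rewrite inE andb_idr // => Su.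
  by apply: adj_complete; apply: contraNneq wS => ->.
move=> res_w; case/orP: Sv => [Sv|res_v]; first exact: IH.
apply: leq_ltn_trans res_v (leq_ltn_trans _ res_w).
by apply/subset_leq_card/subsetP=> u; rewrite inE => /andP[].
Qed.

End InfluencePermutation.

(* Its residual at [v] is the residual of [p] at [tau v], provided the latter is
   at most [t v]. *)
Definition perm_incentive {T : finType} (t p : T -> nat) (tau : {perm T}) :
  T -> nat := fun v => t v - (t (tau v) - p (tau v)).

Lemma Km_adj_complete {m} (u v : 'I_m) : u != v -> Km_adj m u v.
Proof. by []. Qed.

Lemma Km_adj_perm {m} (tau : {perm 'I_m}) u v :
  Km_adj m (tau u) (tau v) = Km_adj m u v.
Proof. by rewrite /Km_adj (inj_eq perm_inj). Qed.

Section KmPermutation.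
Variables (m : nat) (t : nat -> nat) (p : 'I_m -> nat) (tau : {perm 'I_m}).
Hypothesis Ip : incentive (Km_t m t) p.
Hypothesis residual_fits : forall v, t (tau v) - p (tau v) <= t v.

Let q := perm_incentive (Km_t m t) p tau.

Let Iq : incentive (Km_t m t) q.
Proof. by move=> v; apply: leq_subr. Qed.

Let residual_q v : Km_t m t v - q v = Km_t m t (tau v) - p (tau v).
Proof. exact: subKn (residual_fits v). Qed.

Lemma influencedKm_perm r :
  influencedKm m t q r = tau @^-1: influencedKm m t p r.
Proof. exact: influenced_perm (Km_adj_perm tau) Ip Iq residual_q r. Qed.

Lemma l_optimal_Km_perm l :
  l_optimal_Km m t l p -> l_optimal_Km m t l q.
Proof.
case=> _ full_p min_p; split=> //.
  by rewrite influencedKm_perm full_p preimsetT.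
by move=> q' Iq' full_q'; rewrite (cost_perm_residual Ip Iq residual_q) min_p.
Qed.

End KmPermutation.

Lemma card_ord_lt m k : #|[set i : 'I_m | i < k]| <= k.
Proof.
have [km|mk] := leqP k m; last first.
  by apply: leq_trans (max_card _) _; rewrite card_ord ltnW.
rewrite -[X in _ <= X](card_ord k).
apply: leq_trans (leq_imset_card (widen_ord km) _).
apply/subset_leq_card/subsetP=> i; rewrite inE => ik.
by apply/imsetP; exists (Ordinal ik); last apply: val_inj.
Qed.

Section KmExchange.
Variables (m : nat) (t : nat -> nat) (l : nat).
Hypothesis t_monotone : forall i j, i <= j -> j < m -> t i <= t j.

Lemma l_optimal_Km_exchange {p : 'I_m -> nat} {r} {i j : 'I_m} :
  l_optimal_Km m t l p -> i <= j ->
  i \notin influencedKm m t p r -> j \in influencedKm m t p r ->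
  exists q, l_optimal_Km m t l q /\
    influencedKm m t q r = tperm i j @^-1: influencedKm m t p r.
Proof.
move=> Op ij Si Sj; have [Ip _ _] := Op.
have res_ji : Km_t m t j - p j < Km_t m t i - p i.
  by move: Si; apply/(influenced_residual_lt (@Km_adj_complete m) Ip Sj).
have t_ij : t i <= t j by apply: t_monotone.
have fits v : t (tperm i j v) - p (tperm i j v) <= t v.
  case: tpermP => [->|->|_ _]; last exact: leq_subr.
    by apply: ltnW (leq_trans res_ji (leq_subr _ _)).
  exact: leq_trans (leq_subr _ _) t_ij.
exists (perm_incentive (Km_t m t) p (tperm i j)).
by split; [apply: l_optimal_Km_perm | apply: influencedKm_perm].
Qed.

Lemma l_optimal_Km_prefix_influenced (p : 'I_m -> nat) r k :
  l_optimal_Km m t l p -> #|influencedKm m t p r| = k ->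
  exists q, l_optimal_Km m t l q /\
    [set i : 'I_m | i < k] \subset influencedKm m t q r.
Proof.
set Ik := [set i : 'I_m | i < k].
have [N] := ubnP #|Ik :\: influencedKm m t p r|.
elim: N p => // N IH p; set S := influencedKm m t p r => missing Op Sk.
have [sub_IkS|/subsetPn[i Iki Si]] := boolP (Ik \subset S); first by exists p.
have [j Sj Ikj] : exists2 j, j \in S & j \notin Ik.
  apply/subsetPn/negP=> sub_SIk.
  have: #|S| < #|Ik| by apply/proper_card/properP; split=> //; exists i.
  by rewrite Sk ltnNge card_ord_lt.
have ij : i <= j.
  move: Iki Ikj; rewrite !inE -leqNgt => ik kj.
  exact: ltnW (leq_trans ik kj).
have [q [Oq Sq]] := l_optimal_Km_exchange Op ij Si Sj.
apply: IH Oq _; last by rewrite Sq card_preimset //; apply: perm_inj.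
(* The exchange adds [i] to the influenced set and fixes the rest of [Ik]. *)
rewrite ltnS in missing; apply: leq_trans _ missing.
apply/proper_card/properP; split.
  apply/subsetP=> v; rewrite !inE Sq inE => /andP[Sqv Ikv]; rewrite Ikv andbT.
  have iv : i != v by apply: contraNneq Sqv => <-; rewrite tpermL.
  have jv : j != v by apply: contraNneq Ikj => ->; rewrite inE.
  by rewrite (tpermD iv jv) in Sqv.
exists i; first by rewrite in_setD Iki Si.
by rewrite in_setD Sq inE tpermL Sj.
Qed.

End KmExchange.

Theorem lemma6 (n m : nat) (t : nat -> nat) (lambda l k : nat) :
  (forall i, i < n -> 1 <= t i <= n.-1) ->
  1 <= m <= n ->
  (forall i j, i <= j -> j < m -> t i <= t j) ->
  1 <= lambda ->
  1 <= l <= lambda ->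
  k < m ->
  (exists p : 'I_m -> nat,
      l_optimal_Km m t l p /\ #|influencedKm m t p l.-1| = k) ->
  exists p : 'I_m -> nat,
    l_optimal_Km m t l p /\
    [set i : 'I_m | i < k] \subset influencedKm m t p l.-1.
Proof.
move=> _ _ t_monotone _ _ _ [p [Op Sk]].
exact: l_optimal_Km_prefix_influenced Op Sk.
Qed.
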